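(* Let $\mathcal{G}$ be a MAG and let $H,H'$ be two heads whose maximal vertex is $i$. If $H\to^KH'$ and $H\to^LH'$, then $H\to^{K\cap L}H'$.
   Context: A MAG is an acyclic directed mixed graph (directed and bidirected edges, no directed cycles) with $\mathrm{sib}(v)\cap\mathrm{an}(v)=\emptyset$ for all $v$ and in which every nonadjacent pair is m-separated by some set. Vertices are numbered in a topological order (ancestors have smaller labels). $\mathrm{barren}_{\mathcal{G}'}(W)=\{w\in W:\mathrm{de}_{\mathcal{G}'}(w)\cap W=\{w\}\}$; a nonempty $H$ is a head if $\mathrm{barren}(H)=H$ and $H$ lies in one district (bidirected-connected component) of $\mathcal{G}_{\mathrm{an}(H)}$. For a head $H$ with maximal vertex $i$ and $\emptyset\ne K\subseteq H\setminus\{i\}$, write $H\to^KH'$ if $H'=\mathrm{barren}_{\mathcal{G}'}(\mathrm{dis}_{\mathcal{G}'}(i))$, where $\mathcal{G}'=\mathcal{G}_{\mathrm{an}(H)\setminus K}$ and $\mathrm{dis}_{\mathcal{G}'}(i)$ is the district of $i$ in $\mathcal{G}'$. *)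

(* Mixed graphs on vertex set 'I_n (labels = topological order). *)
From mathcomp Require Import all_boot.
Set Implicit Arguments. Unset Strict Implicit. Unset Printing Implicit Defensive.

Section MixedGraph.
Variable n : nat.
(* D a b : directed edge a -> b ;  B a b : bidirected edge a <-> b *)
Variables (D B : rel 'I_n).

(* a is an ancestor of b in G (reflexive: every vertex is its own ancestor) *)
Definition anc (a b : 'I_n) : bool := connect D a b.

Definition an (S : {set 'I_n}) : {set 'I_n} :=
  [set a | [exists b in S, anc a b]].

Definition Drel (A : {set 'I_n}) : rel 'I_n :=
  [rel x y | [&& x \in A, y \in A & D x y]].

Definition Brel (A : {set 'I_n}) : rel 'I_n :=
  [rel x y | [&& x \in A, y \in A & B x y || B y x]].

Definition de (A : {set 'I_n}) (w : 'I_n) : {set 'I_n} :=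
  [set v | (w \in A) && connect (Drel A) w v].

Definition barren (A W : {set 'I_n}) : {set 'I_n} :=
  [set w in W | de A w :&: W == [set w]].

Definition dis (A : {set 'I_n}) (i : 'I_n) : {set 'I_n} :=
  [set v | (i \in A) && connect (Brel A) i v].

Definition is_head (H : {set 'I_n}) : bool :=
  [&& H != set0, barren setT H == H &
      [exists v, (v \in an H) && (H \subset dis (an H) v)]].

Definition is_max (H : {set 'I_n}) (i : 'I_n) : bool :=
  (i \in H) && [forall v in H, (v <= i)%N].

Definition trans (H K H' : {set 'I_n}) : Prop :=
  exists i, [/\ is_max H i, K != set0, K \subset H :\ i &
    H' = barren (an H :\: K) (dis (an H :\: K) i)].

Definition adj (a b : 'I_n) : bool := [|| D a b, D b a, B a b | B b a].

(* arrowhead at v on the edge between u and v *)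
Definition arrow_at (u v : 'I_n) : bool := [|| D u v, B u v | B v u].

Definition mconnecting (Z : {set 'I_n}) (x y : 'I_n) (p : seq 'I_n) : bool :=
  let s := x :: p in
  [&& uniq s, path adj x p, last x p == y &
    [forall k : 'I_(size s),
      (0 < k < (size s).-1)%N ==>
      (let u := nth x s k.-1 in let v := nth x s k in let w := nth x s k.+1 in
       if arrow_at u v && arrow_at w v
       then v \in an Z
       else v \notin Z)]].

Definition msep (Z : {set 'I_n}) (x y : 'I_n) : Prop :=
  [/\ x \notin Z, y \notin Z & forall p : seq 'I_n, ~~ mconnecting Z x y p].

Definition is_MAG : Prop :=
  [/\ (forall a b, D a b -> (a < b)%N),           (* topological order; implies acyclic *)
      (forall a b, B a b = B b a),
      (forall a, ~~ B a a),
      (forall a b, B a b -> ~~ anc a b)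
    & (forall x y, x != y -> ~~ adj x y -> exists Z, msep Z x y)].

End MixedGraph.

From mathcomp Require Import all_boot.
Set Implicit Arguments. Unset Strict Implicit. Unset Printing Implicit Defensive.

(* Write A = an(H).  As H is barren and A consists of ancestors of H, no vertex
   of H has a proper descendant in A.  Every vertex of W = dis_{A\K}(i) has a
   descendant in H' = barren(W), and H' avoids L; so W avoids L (a subset of H),
   hence W is contained in dis_{A\L}(i), and by symmetry the two districts
   coincide.  The district of i in A\(K∩L) = (A\K) ∪ (A\L) is then still W, and
   a directed path ending in W cannot meet K, so removing only K∩L does not
   change which vertices of W are barren.  Finally K∩L is nonempty: otherwise
   H' = barren_A(dis_A(i)) would contain H, hence K, although H' avoids K. *)

Lemma connect_ind (T : finType) (e : rel T) (P : pred T) x :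
  P x -> (forall a b, connect e x a -> P a -> e a b -> P b) ->
  forall y, connect e x y -> P y.
Proof.
move=> Px Pe y /connectP [p e_p ->] {y}.
elim/last_ind: p e_p => [|p z IHp] //=.
rewrite rcons_path last_rcons => /andP [e_p e_z].
by apply: (Pe (last x p)) (IHp e_p) e_z; apply/connectP; exists p.
Qed.

Section Districts.
Variables (n : nat) (B : rel 'I_n).
Implicit Types (X Y W : {set 'I_n}) (i j : 'I_n).

Lemma dis_sub X i : dis B X i \subset X.
Proof.
apply/subsetP => v; rewrite inE => /andP [iX]; apply: connect_ind => // a b _ _.
by case/and3P.
Qed.

Lemma dis_id X i : i \in X -> i \in dis B X i.
Proof. by move=> iX; rewrite inE iX connect0. Qed.

Lemma dis_closed X i a b :
  a \in dis B X i -> b \in X -> B a b || B b a -> b \in dis B X i.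
Proof.
move=> a_i bX Bab; have aX := subsetP (dis_sub X i) a a_i.
move: a_i; rewrite !inE => /andP [-> ia] /=.
by apply: connect_trans ia (connect1 _); rewrite /Brel /= aX bX.
Qed.

Lemma dis_eq X i j : j \in dis B X i -> dis B X j = dis B X i.
Proof.
have symB : connect_sym (Brel B X).
  by apply: sym_connect_sym => x y; rewrite /Brel /= andbCA orbC.
move=> j_i; have jX := subsetP (dis_sub X i) j j_i.
move: j_i; rewrite inE => /andP [iX ij].
apply/setP => v; rewrite !inE iX jX /=; apply/idP/idP.
  exact: connect_trans.
by rewrite symB in ij; apply: connect_trans.
Qed.

Lemma dis_minimal X W i :
  (i \in X -> i \in W) ->
  (forall a b, a \in dis B X i -> a \in W -> Brel B X a b -> b \in W) ->
  dis B X i \subset W.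
Proof.
move=> iW W_closed; apply/subsetP => v; rewrite inE => /andP [iX].
apply: connect_ind (iW iX) _ v => a b ia; apply: W_closed.
by rewrite inE iX.
Qed.

Lemma dis_sub_dis X Y i : dis B X i \subset Y -> dis B X i \subset dis B Y i.
Proof.
move=> sXY; apply: dis_minimal => [iX | a b a_i aY /and3P [_ bX Bab]].
  exact/dis_id/(subsetP sXY)/dis_id.
exact: dis_closed aY (subsetP sXY b (dis_closed a_i bX Bab)) Bab.
Qed.

Lemma dis_setU X Y i : dis B X i = dis B Y i -> dis B (X :|: Y) i = dis B X i.
Proof.
move=> eqXY; apply/eqP; rewrite eqEsubset; apply/andP; split; last first.
  exact/dis_sub_dis/(subset_trans (dis_sub X i))/subsetUl.
apply: dis_minimal => [| a b a_i aX /and3P [_]].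
  by rewrite inE => /orP [/dis_id // | /dis_id]; rewrite eqXY.
rewrite inE => /orP [bX | bY] Bab; first exact: dis_closed aX bX Bab.
by rewrite eqXY in aX *; apply: dis_closed aX bY Bab.
Qed.

End Districts.

Lemma head_sub_dis n (D B : rel 'I_n) (H : {set 'I_n}) i :
  is_head D B H -> i \in H -> H \subset dis B (an D H) i.
Proof.
by case/and3P=> _ _ /existsP [v /andP [_ sHv]] iH; rewrite (dis_eq (subsetP sHv i iH)).
Qed.

Section Descendants.
Variables (n : nat) (D : rel 'I_n).
Hypothesis D_topo : forall a b, D a b -> (a < b)%N.
Implicit Types (X Y W : {set 'I_n}).

Lemma connect_Drel X a b : connect (Drel D X) a b -> connect D a b.
Proof. by apply: connect_sub => u v /and3P [_ _ /connect1]. Qed.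

Lemma connect_leq a b : connect D a b -> (a <= b)%N.
Proof.
move=> ab; apply: (@connect_ind _ D (fun y => a <= y)%N a) ab => // u v _ au.
by move/D_topo/ltnW; apply: leq_trans.
Qed.

Lemma connect_antisym a b : connect D a b -> connect D b a -> a = b.
Proof.
by move=> /connect_leq ab /connect_leq ba; apply: val_inj; apply/eqP; rewrite eqn_leq ab.
Qed.

Lemma barren_sub X W : barren D X W \subset W.
Proof. by apply/subsetP => w; rewrite inE => /andP []. Qed.

Lemma exists_barren_desc X W v : W \subset X -> v \in W ->
  exists2 h, h \in barren D X W & connect (Drel D X) v h.
Proof.
move=> sWX vW; pose P u := (u \in W) && connect (Drel D X) v u.
have Pv : P v by rewrite /P vW connect0.
have [h /andP [hW vh] h_max] := arg_maxnP (@nat_of_ord n) Pv.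
exists h => //; rewrite inE hW; apply/eqP/setP => x; rewrite !inE.
have [-> | xh] := eqVneq x h; first by rewrite hW connect0 (subsetP sWX).
apply/andP => -[/andP [_ hx] xW]; case/eqP: xh; apply/val_inj/eqP.
rewrite eqn_leq (connect_leq (connect_Drel hx)) andbT.
by apply: h_max; rewrite /P xW (connect_trans vh).
Qed.

Lemma eq_barren X Y W : Y \subset X -> W \subset Y ->
  (forall u x, u \in X -> x \in W -> connect D u x -> u \in Y) ->
  barren D X W = barren D Y W.
Proof.
move=> sYX sWY Y_upper; apply: eq_finset => w; case wW: (w \in W) => //=.
have wY := subsetP sWY w wW; have wX := subsetP sYX w wY.
congr (_ == _); apply/setP => x; rewrite !inE wX wY /=.
case xW: (x \in W); rewrite ?andbF // !andbT; apply/idP/idP; last first.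
  apply: connect_sub => a b /and3P [aY bY ab]; apply: connect1.
  by rewrite /Drel /= !(subsetP sYX).
move=> wx; have: connect [rel a b | Drel D X b a] x w by rewrite connect_rev.
apply: (@connect_ind _ _ (fun a => connect (Drel D Y) a x)) => // a b _ ax.
case/and3P=> bX aX ba; have Dax := connect_Drel ax.
have Dbx := connect_trans (connect1 ba) Dax.
apply: connect_trans ax; apply: connect1.
by rewrite /Drel /= ba (Y_upper b x) ?(Y_upper a x).
Qed.

End Descendants.

Section BarrenAncestral.
Variables (n : nat) (D B : rel 'I_n) (H : {set 'I_n}).
Hypothesis D_topo : forall a b, D a b -> (a < b)%N.
Hypothesis barrenH : barren D setT H = H.
Local Notation A := (an D H).
Implicit Types (X W K L : {set 'I_n}) (i : 'I_n).

Lemma barren_an_connect h y : h \in H -> y \in A -> connect D h y -> y = h.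
Proof.
move=> hH; rewrite inE => /existsP [b /andP [bH yb]] hy.
have hb := connect_trans hy yb.
move: hH; rewrite -{1}barrenH inE => /andP [_ /eqP/setP/(_ b)].
have DrelT : Drel D setT =2 D by move=> u v; rewrite /Drel /= !in_setT.
rewrite !inE bH andbT (eq_connect DrelT) hb; case: eqP => // b_h _.
by rewrite b_h in yb; exact: (connect_antisym D_topo yb hy).
Qed.

Lemma sub_barren_an X W : X \subset A -> W \subset X -> H :&: W \subset barren D X W.
Proof.
move=> sXA sWX; apply/subsetP => h; rewrite inE => /andP [hH hW].
rewrite inE hW; apply/eqP/setP => x; rewrite !inE (subsetP sWX) //=.
apply/andP/eqP => [[/connect_Drel hx xW] | ->]; last by rewrite connect0.
exact: barren_an_connect hH (subsetP sXA x (subsetP sWX x xW)) hx.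
Qed.

Lemma sub_barren_dis i : H \subset dis B A i -> H \subset barren D A (dis B A i).
Proof.
move=> sHdis; rewrite -{1}(setIidPl sHdis).
exact: (sub_barren_an (subxx _) (dis_sub _ _ _)).
Qed.

Lemma disjoint_barren_an X W L : X \subset A -> W \subset X -> L \subset H ->
  [disjoint barren D X W & L] -> [disjoint W & L].
Proof.
move=> sXA sWX sLH barren_L; rewrite disjoint_sym; apply/pred0P => v /=.
apply/andP => -[vL vW]; have [h h_barren vh] := exists_barren_desc D_topo sWX vW.
have hA := subsetP sXA h (subsetP sWX h (subsetP (barren_sub _ _ _) h h_barren)).
have h_v := barren_an_connect (subsetP sLH v vL) hA (connect_Drel vh).
by have := disjointFr barren_L h_barren; rewrite h_v vL.
Qed.

Lemma dis_setD_sub K L i : L \subset H ->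
  barren D (A :\: K) (dis B (A :\: K) i) = barren D (A :\: L) (dis B (A :\: L) i) ->
  dis B (A :\: K) i \subset dis B (A :\: L) i.
Proof.
move=> sLH eq_barrenKL; apply: dis_sub_dis; rewrite subsetD.
rewrite (subset_trans (dis_sub _ _ _) (subsetDl _ _)) /=.
apply: disjoint_barren_an (subsetDl _ _) (dis_sub _ _ _) sLH _.
rewrite eq_barrenKL; apply: disjointWl (subset_trans (barren_sub _ _ _) (dis_sub _ _ _)) _.
by rewrite disjoints_subset; apply/subsetP => x; rewrite !inE => /andP [].
Qed.

Lemma barren_dis_setDI K L i : K \subset H -> L \subset H ->
  barren D (A :\: K) (dis B (A :\: K) i) = barren D (A :\: L) (dis B (A :\: L) i) ->
  barren D (A :\: (K :&: L)) (dis B (A :\: (K :&: L)) i)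
    = barren D (A :\: K) (dis B (A :\: K) i).
Proof.
move=> sKH sLH eq_barrenKL.
have eq_dis : dis B (A :\: K) i = dis B (A :\: L) i.
  by apply/eqP; rewrite eqEsubset !dis_setD_sub.
rewrite setDIr dis_setU //; apply: eq_barren; rewrite ?subsetUl ?dis_sub //.
move=> u x; rewrite inE => u_AKL x_dis ux; have xAK := subsetP (dis_sub _ _ _) x x_dis.
have uA : u \in A by case/orP: u_AKL; rewrite inE => /andP [].
rewrite inE uA andbT; apply/negP => uK.
have x_u := barren_an_connect (subsetP sKH u uK) (subsetP (subsetDl _ _) x xAK) ux.
by move: xAK; rewrite x_u inE uK.
Qed.

End BarrenAncestral.

Lemma is_max_inj n (H : {set 'I_n}) i j : is_max H i -> is_max H j -> i = j.
Proof.
move=> /andP [iH /forall_inP i_max] /andP [jH /forall_inP j_max].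
by apply/val_inj/eqP; rewrite eqn_leq i_max ?j_max.
Qed.

Lemma transE {n} {D B : rel 'I_n} {H K H' : {set 'I_n}} {i} : is_max H i ->
  trans D B H K H' <->
  [/\ K != set0, K \subset H :\ i & H' = barren D (an D H :\: K) (dis B (an D H :\: K) i)].
Proof.
move=> iHmax; split=> [[j [/is_max_inj/(_ iHmax) ->]] // | [K0 sKi EK]].
by exists i; split.
Qed.

Theorem lemmaC1 (n : nat) (D B : rel 'I_n) (H H' K L : {set 'I_n}) (i : 'I_n) :
  is_MAG D B ->
  is_head D B H -> is_head D B H' ->
  is_max H i -> is_max H' i ->
  trans D B H K H' -> trans D B H L H' ->
  trans D B H (K :&: L) H'.
Proof.
move=> [D_topo _ _ _ _] headH _ maxH _.
move=> /(transE maxH) [K0 sKHi EK] /(transE maxH) [_ sLHi EL]; apply/(transE maxH).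
have /and3P [_ /eqP barrenH _] := headH.
have sKH := subset_trans sKHi (subD1set H i).
have sLH := subset_trans sLHi (subD1set H i).
have EKL : H' = barren D (an D H :\: (K :&: L)) (dis B (an D H :\: (K :&: L)) i).
  by rewrite (barren_dis_setDI D_topo barrenH) // -?EK -?EL.
split=> //; last exact: subset_trans (subsetIl K L) sKHi.
apply: contra_neq K0 => KL0.
have sHH' : H \subset H'.
  have /andP [iH _] := maxH.
  by rewrite EKL KL0 setD0 sub_barren_dis // head_sub_dis.
have : K \subset an D H :\: K.
  apply: subset_trans sKH (subset_trans sHH' _).
  by rewrite EK; apply: subset_trans (barren_sub _ _ _) (dis_sub _ _ _).
by rewrite subsetD => /andP [_ /disjoint_setI0]; rewrite setIid.
Qed.
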